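(* Let $L$ be a generic length vector satisfying the strict triangle inequality. A vertex of $\Gamma(L)$ labeled $(I,J,K)$ is incident to exactly $2^{i}+2^{j}+2^{k}-6$ edges, where $i,j,k$ are the cardinalities of $I,J,K$ respectively.
   Context: Let $n\ge 4$ and $L=(l_1,\dots,l_n)$ be positive reals with $l_i<\sum_{j\ne i}l_j$ for every $i$ (strict triangle inequality), and generic: there is no $J\subseteq[n]$ with $\sum_{i\in J}l_i=\sum_{i\notin J}l_i$. Here $[n]=\{1,\dots,n\}$ and $|L|=\sum_{i=1}^n l_i$. A set $I\subseteq[n]$ is short if $\sum_{i\in I}l_i<|L|/2$ and long otherwise. A cyclically ordered partition of $[n]$ into $k$ parts is a sequence $(A_1,\dots,A_k)$ of pairwise disjoint nonempty sets with union $[n]$, considered up to cyclic shifts $(A_1,\dots,A_k)\sim(A_2,\dots,A_k,A_1)$; there is no ordering inside a part. It is admissible if every part is short. The graph $\Gamma(L)$ has as vertices the admissible cyclically ordered partitions of $[n]$ into 3 parts, written $(I,J,K)$, and as edges the admissible cyclically ordered partitions into 4 parts $(A,B,C,D)$; such an edge is incident to each of the partitions $(A\cup B,C,D)$, $(A,B\cup C,D)$, $(A,B,C\cup D)$, $(D\cup A,B,C)$ that is admissible. *)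

From HB Require Import structures.
From mathcomp Require Import all_boot all_order all_algebra.
Set Implicit Arguments. Unset Strict Implicit. Unset Printing Implicit Defensive.
Import Order.TTheory GRing.Theory Num.Theory.

Section Defs.
Variables (R : realFieldType) (n : nat) (L : 'I_n -> R).
Local Open Scope ring_scope.

Definition sumL (S : {set 'I_n}) : R := \sum_(i in S) L i.
Definition totL : R := sumL [set: 'I_n].

Definition positive_lengths : Prop := forall i, 0 < L i.
Definition strict_triangle : Prop :=
  forall i : 'I_n, L i < \sum_(j < n | j != i) L j.
Definition generic : Prop := forall J : {set 'I_n}, sumL J != sumL (~: J).

Definition short (S : {set 'I_n}) : bool := sumL S < totL / 2%:R.

Definition part (s : seq {set 'I_n}) (i : nat) : {set 'I_n} := nth set0 s i.

Definition ordpart k (t : k.-tuple {set 'I_n}) : bool :=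
  [&& [forall i : 'I_k, part t i != set0],
      [forall i : 'I_k, forall j : 'I_k,
         (i != j) ==> [disjoint part t i & part t j]] &
      (\bigcup_(i < k) part t i == [set: 'I_n])].

Definition admissible k (t : k.-tuple {set 'I_n}) : bool :=
  ordpart t && [forall i : 'I_k, short (part t i)].

Definition cyc k (t : k.-tuple {set 'I_n}) : {set k.-tuple {set 'I_n}} :=
  [set u : k.-tuple {set 'I_n} | [exists r : 'I_k, val u == rot r (val t)]].

(* The four 3-part partitions obtained from (A,B,C,D) by merging two
   cyclically adjacent parts. *)
Definition merges (e : 4.-tuple {set 'I_n}) : seq (3.-tuple {set 'I_n}) :=
  let A := part e 0 in let B := part e 1 in
  let C := part e 2 in let D := part e 3 in
  [:: [tuple A :|: B; C; D]; [tuple A; B :|: C; D];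
      [tuple A; B; C :|: D]; [tuple D :|: A; B; C]].

Definition incident (e : 4.-tuple {set 'I_n}) (v : 3.-tuple {set 'I_n}) : bool :=
  has (fun m => admissible m && (cyc m == cyc v)) (merges e).

(* the set of edges of Gamma(L) incident to the vertex (class of) v *)
Definition incident_edges (v : 3.-tuple {set 'I_n})
  : {set {set 4.-tuple {set 'I_n}}} :=
  [set cyc e | e in [pred e : 4.-tuple {set 'I_n} |
                          admissible e && incident e v]].

End Defs.

From HB Require Import structures.
From mathcomp Require Import all_boot all_order all_algebra zify.
Import Order.TTheory GRing.Theory Num.Theory.
Set Implicit Arguments. Unset Strict Implicit. Unset Printing Implicit Defensive.

(* Let v = (X_0, X_1, X_2) be an admissible 3-partition.  An edge
   (A, B, C, D) is incident to v when merging two cyclically adjacent parts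
   gives a cyclic rotation of v.  Rotating the edge, we may assume the merged
   parts are the first two, so every incident edge is, up to rotation,
   the "split" (A, X_p \ A, X_(p+1), X_(p+2)) of some part X_p along a
   nonempty proper subset A; conversely every such split is admissible
   (subsets of short sets are short) and incident to v.
   The split determines (p, A): its first two parts are not parts of v while
   its last two are, and this pattern survives no nontrivial rotation, so
   cyclically equal splits are equal; merging back recovers the rotation of
   v, hence p, and A is the first part.  So the incident edges are in
   bijection with the pairs (p, A), and there are
   sum_p (2^|X_p| - 2) = 2^i + 2^j + 2^k - 6 of them. *)

Lemma rot_ord (T : Type) k (s : seq T) m : size s = k -> 0 < k ->
  exists r : 'I_k, rot m s = rot r s.
Proof.
move=> hs k0; case: (ltnP m k) => hmk; first by exists (Ordinal hmk).
by exists (Ordinal k0); rewrite rot0 rot_oversize // hs.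
Qed.

Lemma rot4_fix (T : Type) (P : T -> bool) (s : seq T) r : size s = 4 ->
  map P s = [:: false; false; true; true] -> map P (rot r s) = map P s ->
  rot r s = s.
Proof.
move=> hs hP; rewrite map_rot hP.
by case: r => [|[|[|[|r]]]] // _; rewrite ?rot0 // rot_oversize ?hs.
Qed.

Lemma proper_setD n (X A : {set 'I_n}) : A \proper X -> A != set0 ->
  X :\: A \proper X /\ X :\: A != set0.
Proof.
move=> hA hA0; split; last by rewrite setD_eq0 (proper_subn hA).
rewrite properEneq subsetDl andbT; apply: contra_neq hA0 => /setDidPl dXA.
by rewrite -(setIidPr (proper_sub hA)) (disjoint_setI0 dXA).
Qed.

Lemma tuple3E n (t : 3.-tuple {set 'I_n}) : t = [tuple part t 0; part t 1; part t 2].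
Proof. by apply: val_inj; case: t => [[|a [|b [|c []]]]]. Qed.

Lemma tuple4E n (t : 4.-tuple {set 'I_n}) :
  t = [tuple part t 0; part t 1; part t 2; part t 3].
Proof. by apply: val_inj; case: t => [[|a [|b [|c [|d []]]]]]. Qed.

Section CyclicClasses.
Variables (n k : nat).
Implicit Types (t u : k.-tuple {set 'I_n}).

Definition turn t (p : 'I_k) : k.-tuple {set 'I_n} := [tuple of rot p t].

Lemma part_turn0 t p : part (turn t p) 0 = part t p.
Proof.
by rewrite /part /= /rot nth_cat size_drop size_tuple subn_gt0 ltn_ord nth_drop addn0.
Qed.

Hypothesis k_gt0 : 0 < k.

Lemma cyc_memP t u : reflect (exists m, val u = rot m (val t)) (u \in cyc t).
Proof.
rewrite inE; apply: (iffP existsP) => [[r /eqP ->]|[m hm]]; first by exists r.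
by have [r hr] := rot_ord m (size_tuple t) k_gt0; exists r; rewrite hm hr.
Qed.

Lemma cyc_refl t : t \in cyc t.
Proof. by apply/cyc_memP; exists 0; rewrite rot0. Qed.

Lemma cyc_eq t u : u \in cyc t -> cyc u = cyc t.
Proof.
move=> /cyc_memP [r hu]; apply/setP => x; apply/cyc_memP/cyc_memP => -[m hx].
  by exists (rot_add (val t) r m); rewrite hx hu rot_rot_add.
have ht : val t = rot (k - r) (val u).
  by rewrite hu -{1}(rotK r (val t)) /rotr size_rot size_tuple.
by exists (rot_add (val u) (k - r) m); rewrite hx ht rot_rot_add.
Qed.

Lemma cyc_rot t u m : val u = rot m (val t) -> cyc u = cyc t.
Proof. by move=> hu; apply: cyc_eq; apply/cyc_memP; exists m. Qed.

Lemma turn_cyc t p : cyc (turn t p) = cyc t.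
Proof. exact: cyc_rot. Qed.

Lemma cyc_turnP t u : cyc u = cyc t -> exists p, u = turn t p.
Proof.
move=> hut; have := cyc_refl u; rewrite hut inE => /existsP [p /eqP hp].
by exists p; apply: val_inj.
Qed.

End CyclicClasses.

Section OrderedPartitions.
Variables (n k : nat).
Implicit Types (t : k.-tuple {set 'I_n}).

Lemma ordpart_disjoint t (X Y : {set 'I_n}) : ordpart t -> X \in val t -> Y \in val t ->
  X != Y -> [disjoint X & Y].
Proof.
move=> /and3P [_ /forallP hd _] hX hY hXY.
have hi : index X t < k by rewrite -{2}(size_tuple t) index_mem.
have hj : index Y t < k by rewrite -{2}(size_tuple t) index_mem.
have := implyP (forallP (hd (Ordinal hi)) (Ordinal hj)).
rewrite /part /= !nth_index //; apply; apply: contra_neq hXY => -[hij].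
by rewrite -(nth_index set0 hX) -(nth_index set0 hY) hij.
Qed.

(* The parts of an ordered partition are nonempty and disjoint, hence
   pairwise distinct. *)
Lemma ordpart_uniq t : ordpart t -> uniq t.
Proof.
move=> /and3P [/forallP hne /forallP hd _]; apply/(uniqP set0) => i j.
rewrite !inE size_tuple => hi hj hij; apply/eqP; apply: contraT => nij.
have := implyP (forallP (hd (Ordinal hi)) (Ordinal hj)) nij.
by rewrite /part /= hij -setI_eq0 setIid (negPf (hne (Ordinal hj))).
Qed.

Lemma proper_part_notin t (X A : {set 'I_n}) : ordpart t -> X \in val t ->
  A \proper X -> A != set0 -> A \notin val t.
Proof.
move=> ht hX; rewrite properEneq => /andP [nAX sAX] nA0; apply/negP => hA.
have := ordpart_disjoint ht hX hA; rewrite eq_sym => /(_ nAX).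
by rewrite -setI_eq0 (setIidPr sAX) (negPf nA0).
Qed.

Lemma turn_inj t p q : ordpart t -> turn t p = turn t q -> p = q.
Proof.
move=> ht hpq; apply: val_inj; apply/eqP.
rewrite -(nth_uniq set0 _ _ (ordpart_uniq ht)) ?size_tuple ?ltn_ord //.
by rewrite -[nth _ _ p]/(part t p) -[nth _ _ q]/(part t q) -!part_turn0 hpq.
Qed.

End OrderedPartitions.

Section Admissibility.
Variables (R : realFieldType) (n : nat) (L : 'I_n -> R).
Hypothesis hpos : positive_lengths L.

Lemma short_sub (S T : {set 'I_n}) : S \subset T -> short L T -> short L S.
Proof.
move=> hST; rewrite /short; apply: le_lt_trans.
rewrite /sumL [X in (_ <= X)%R](big_setID S) /= (setIidPr hST) lerDl.
by apply: sumr_ge0 => i _; apply: ltW.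
Qed.

Definition admissible3 (X Y Z : {set 'I_n}) : Prop :=
  [/\ [/\ X != set0, Y != set0 & Z != set0],
      [/\ [disjoint X & Y], [disjoint Y & Z] & [disjoint X & Z]],
      X :|: Y :|: Z = setT & [/\ short L X, short L Y & short L Z]].

Definition admissible4 (a b c d : {set 'I_n}) : Prop :=
  [/\ [/\ a != set0, b != set0, c != set0 & d != set0],
      [/\ [disjoint a & b], [disjoint b & c], [disjoint c & d] & [disjoint d & a]],
      [disjoint a & c] /\ [disjoint b & d],
      a :|: b :|: c :|: d = setT & [/\ short L a, short L b, short L c & short L d]].

Local Notation ord_ k i := (@Ordinal k i isT).

Lemma admissible3E (X Y Z : {set 'I_n}) :
  admissible L [tuple X; Y; Z] <-> admissible3 X Y Z.
Proof.
rewrite /admissible /ordpart !big_ord_recr big_ord0 /= set0U; split.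
- case/andP => /and3P [/forallP hne /forallP hd /eqP hU] /forallP hs.
  have d i j := implyP (forallP (hd i) j).
  split => //.
  + by split; [exact: (hne (ord_ 3 0)) | exact: (hne (ord_ 3 1))
      | exact: (hne (ord_ 3 2))].
  + by split; [exact: (d (ord_ 3 0) (ord_ 3 1)) | exact: (d (ord_ 3 1) (ord_ 3 2))
      | exact: (d (ord_ 3 0) (ord_ 3 2))].
  + by split; [exact: (hs (ord_ 3 0)) | exact: (hs (ord_ 3 1)) | exact: (hs (ord_ 3 2))].
- case=> [[h1 h2 h3] [d1 d2 d3] hU [s1 s2 s3]].
  apply/andP; split; last by apply/forallP => -[[|[|[|i]]] hi].
  apply/and3P; split; last by rewrite hU.
  + by apply/forallP => -[[|[|[|i]]] hi].
  + apply/forallP => -[[|[|[|i]]] hi]; apply/forallP => -[[|[|[|j]]] hj] //=;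
    by rewrite disjoint_sym.
Qed.

Lemma admissible4E (a b c d : {set 'I_n}) :
  admissible L [tuple a; b; c; d] <-> admissible4 a b c d.
Proof.
rewrite /admissible /ordpart !big_ord_recr big_ord0 /= set0U; split.
- case/andP => /and3P [/forallP hne /forallP hd /eqP hU] /forallP hs.
  have dd i j := implyP (forallP (hd i) j).
  split => //.
  + by split; [exact: (hne (ord_ 4 0)) | exact: (hne (ord_ 4 1))
      | exact: (hne (ord_ 4 2)) | exact: (hne (ord_ 4 3))].
  + by split; [exact: (dd (ord_ 4 0) (ord_ 4 1)) | exact: (dd (ord_ 4 1) (ord_ 4 2))
      | exact: (dd (ord_ 4 2) (ord_ 4 3)) | exact: (dd (ord_ 4 3) (ord_ 4 0))].
  + by split; [exact: (dd (ord_ 4 0) (ord_ 4 2))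
      | exact: (dd (ord_ 4 1) (ord_ 4 3))].
  + by split; [exact: (hs (ord_ 4 0)) | exact: (hs (ord_ 4 1))
      | exact: (hs (ord_ 4 2)) | exact: (hs (ord_ 4 3))].
- case=> [[h1 h2 h3 h4] [d1 d2 d3 d4] [d5 d6] hU [s1 s2 s3 s4]].
  apply/andP; split; last by apply/forallP => -[[|[|[|[|i]]]] hi].
  apply/and3P; split; last by rewrite hU.
  + by apply/forallP => -[[|[|[|[|i]]]] hi].
  + apply/forallP => -[[|[|[|[|i]]]] hi]; apply/forallP => -[[|[|[|[|j]]]] hj] //=;
    by rewrite disjoint_sym.
Qed.

Lemma admissible3_rot (X Y Z : {set 'I_n}) :
  admissible3 X Y Z -> admissible3 Y Z X.
Proof.
case=> [[h1 h2 h3] [d1 d2 d3] hU [s1 s2 s3]]; split => //.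
- by split; rewrite // disjoint_sym.
- by rewrite setUC setUA.
Qed.

Lemma admissible_turn (v : 3.-tuple {set 'I_n}) p :
  admissible L v -> admissible L (turn v p).
Proof.
rewrite (tuple3E v) => /admissible3E hv.
have hv1 := admissible3_rot hv; have hv2 := admissible3_rot hv1.
by rewrite (tuple3E (turn _ _)); apply/admissible3E; case: p => [[|[|[|p]]] hp].
Qed.

End Admissibility.

Section SplitMerge.
Variables (R : realFieldType) (n : nat) (L : 'I_n -> R).
Hypothesis hpos : positive_lengths L.
Implicit Types (v w : 3.-tuple {set 'I_n}) (e : 4.-tuple {set 'I_n}).

Definition split_edge w (A : {set 'I_n}) : 4.-tuple {set 'I_n} :=
  [tuple A; part w 0 :\: A; part w 1; part w 2].

Definition merge01 e : 3.-tuple {set 'I_n} :=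
  [tuple part e 0 :|: part e 1; part e 2; part e 3].

Lemma split_edgeK w (A : {set 'I_n}) : A \subset part w 0 -> merge01 (split_edge w A) = w.
Proof.
by move=> hA; rewrite [RHS]tuple3E; apply: val_inj; rewrite /= -{1}(setIidPr hA) setID.
Qed.

Lemma merge01_split w (a b c d : {set 'I_n}) : b != set0 -> [disjoint a & b] ->
  merge01 [tuple a; b; c; d] = w ->
  a \proper part w 0 /\ [tuple a; b; c; d] = split_edge w a.
Proof.
move=> nb0 dab <-; split.
  apply: properUl; apply: contraNN nb0 => sba.
  by move: dab; rewrite disjoint_sym -setI_eq0 (setIidPl sba).
apply: val_inj => /=; rewrite setDUl setDv set0U.
by move: dab; rewrite disjoint_sym => /setDidPl ->.
Qed.

Lemma split_edge_admissible w (A : {set 'I_n}) : admissible L w ->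
  A \proper part w 0 -> A != set0 -> admissible L (split_edge w A).
Proof.
rewrite [in admissible L w](tuple3E w) /split_edge.
set X := part w 0; set Y := part w 1; set Z := part w 2.
move=> /admissible3E [[hX hY hZ] [dXY dYZ dXZ] hU [sX sY sZ]] hA hA0.
have sAX := proper_sub hA; have sDX : X :\: A \subset X := subsetDl X A.
apply/admissible4E; split.
- by split; rewrite // setD_eq0 (proper_subn hA).
- split; [ | exact: disjointWl sDX dXY | done | ].
    by rewrite disjoint_sym; have /subsetDP [] := subxx (X :\: A).
  by rewrite disjoint_sym; apply: disjointWl sAX dXZ.
- by split; [apply: disjointWl sAX dXY | apply: disjointWl sDX dXZ].
- by rewrite -{1}(setIidPr sAX) setID.
- by split; [exact (short_sub hpos sAX sX) | exact (short_sub hpos sDX sX) | |].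
Qed.

Lemma split_edge_incident v w (A : {set 'I_n}) : admissible L w ->
  A \subset part w 0 -> cyc w = cyc v -> incident L (split_edge w A) v.
Proof.
move=> hw hA hwv; apply/hasP; exists (merge01 (split_edge w A)).
  by rewrite inE eqxx.
by rewrite split_edgeK // hw hwv eqxx.
Qed.

Lemma incident_merge01 v (a b c d : {set 'I_n}) : b != set0 -> [disjoint a & b] ->
  cyc [tuple a :|: b; c; d] = cyc v ->
  exists p : 'I_3, a \proper part v p /\ [tuple a; b; c; d] = split_edge (turn v p) a.
Proof.
move=> nb0 dab hm; have [p hp] := cyc_turnP (isT : 0 < 3) hm.
by have [ha he] := merge01_split nb0 dab hp; exists p; rewrite -part_turn0.
Qed.

(* The merge witnessing incidence is brought to the front by rotating
   the edge. *)
Lemma incident_split v e : admissible L e -> incident L e v ->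
  exists (p : 'I_3) (A : {set 'I_n}), [/\ A \proper part v p, A != set0 &
                  cyc e = cyc (split_edge (turn v p) A)].
Proof.
rewrite [in admissible L e](tuple4E e) [in incident L e v](tuple4E e).
set a := part e 0; set b := part e 1; set c := part e 2; set d := part e 3.
move=> /admissible4E [[ha hb hc hd] [dab dbc dcd dda] _ _ _].
rewrite /incident /= orbF => /or4P [] /andP [_ /eqP hm].
- have [p [hp he]] := incident_merge01 hb dab hm.
  by exists p, a; rewrite (tuple4E e) he.
- have hm' : cyc [tuple b :|: c; d; a] = cyc v.
    by rewrite -hm; apply: (cyc_rot (isT : 0 < 3) (m := 1)).
  have [p [hp he]] := incident_merge01 hc dbc hm'.
  exists p, b; split => //; rewrite -he [in LHS](tuple4E e).
  by apply: esym; apply: (cyc_rot (isT : 0 < 4) (m := 1)).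
- have hm' : cyc [tuple c :|: d; a; b] = cyc v.
    by rewrite -hm; apply: (cyc_rot (isT : 0 < 3) (m := 2)).
  have [p [hp he]] := incident_merge01 hd dcd hm'.
  exists p, c; split => //; rewrite -he [in LHS](tuple4E e).
  by apply: esym; apply: (cyc_rot (isT : 0 < 4) (m := 2)).
- have [p [hp he]] := incident_merge01 ha dda hm.
  exists p, d; split => //; rewrite -he [in LHS](tuple4E e).
  by apply: esym; apply: (cyc_rot (isT : 0 < 4) (m := 3)).
Qed.

Lemma split_edge_pattern v (p : 'I_3) (A : {set 'I_n}) : ordpart v ->
  A \proper part v p -> A != set0 ->
  [seq Y \in val v | Y <- val (split_edge (turn v p) A)] = [:: false; false; true; true].
Proof.
move=> hv hA hA0; have [hD hD0] := proper_setD hA hA0.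
have hX : part v p \in val v by apply: mem_nth; rewrite size_tuple.
have in_turn i : i < 3 -> part (turn v p) i \in val v.
  by move=> hi; rewrite -(mem_rot p); apply: mem_nth; rewrite size_rot size_tuple.
have hY := in_turn 1 isT; have hZ := in_turn 2 isT.
rewrite /split_edge part_turn0; set Y := part _ 1 in hY *; set Z := part _ 2 in hZ *.
by rewrite /= hY hZ !(negPf (proper_part_notin hv hX _ _)).
Qed.

Lemma split_edge_cyc_inj v (p q : 'I_3) (A B : {set 'I_n}) : ordpart v ->
  A \proper part v p -> A != set0 -> B \proper part v q -> B != set0 ->
  cyc (split_edge (turn v p) A) = cyc (split_edge (turn v q) B) -> p = q /\ A = B.
Proof.
move=> hv hA hA0 hB hB0 hc.
have := cyc_refl (isT : 0 < 4) (split_edge (turn v q) B).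
rewrite -hc => /(cyc_memP (isT : 0 < 4)) [r hr].
have heq : split_edge (turn v q) B = split_edge (turn v p) A.
  apply: val_inj; rewrite hr; apply: (rot4_fix (P := fun Y => Y \in val v)).
  - by rewrite size_tuple.
  - exact: split_edge_pattern.
  - by rewrite -hr !split_edge_pattern.
split; last by have /= -> := congr1 (fun e => part e 0) heq.
have sA : A \subset part (turn v p) 0 by rewrite part_turn0 proper_sub.
have sB : B \subset part (turn v q) 0 by rewrite part_turn0 proper_sub.
by apply: (turn_inj hv); rewrite -(split_edgeK sA) -(split_edgeK sB) heq.
Qed.

End SplitMerge.

Lemma card_proper_nonempty (T : finType) (X : {set T}) : X != set0 ->
  #|[set A : {set T} | A \proper X & A != set0]| = (2 ^ #|X| - 2)%N.
Proof.
move=> hX; rewrite -card_powerset [#|powerset X|](cardsD1 X).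
rewrite [#|powerset X :\ X|](cardsD1 set0) !inE subxx sub0set eq_sym hX /=.
rewrite !add1n subn2 /=; apply: eq_card => A; rewrite !inE properEneq.
by case: (A != set0); case: (A != X); rewrite ?andbF ?andbT.
Qed.

Lemma card_pairs (I T : finType) (P : I -> T -> bool) :
  #|[set x : I * T | P x.1 x.2]| = (\sum_i #|[set y | P i y]|)%N.
Proof.
under eq_bigr => i _ do rewrite -sum1_card.
by rewrite -sum1_card pair_big_dep; apply: eq_bigl => x; rewrite !inE.
Qed.

Definition splittings n (v : 3.-tuple {set 'I_n}) : {set 'I_3 * {set 'I_n}} :=
  [set pA : 'I_3 * {set 'I_n} | (pA.2 \proper part v pA.1) && (pA.2 != set0)].

Lemma card_splittings n (v : 3.-tuple {set 'I_n}) : ordpart v ->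
  #|splittings v| = (2 ^ #|part v 0| + 2 ^ #|part v 1| + 2 ^ #|part v 2| - 6)%N.
Proof.
move=> /and3P [/forallP hne _ _].
rewrite /splittings (card_pairs (fun (p : 'I_3) (A : {set 'I_n}) =>
  (A \proper part v p) && (A != set0))).
rewrite (eq_bigr (fun p : 'I_3 => 2 ^ #|part v p| - 2)%N) => [|p _]; last first.
  by rewrite -card_proper_nonempty ?hne //; apply: eq_card => A; rewrite !inE.
have two_le (p : 'I_3) : (2 <= 2 ^ #|part v p|)%N.
  by rewrite -{1}(expn1 2) leq_exp2l // card_gt0 (hne p).
have := two_le ord0; have := two_le (@Ordinal 3 1 isT); have := two_le ord_max.
rewrite !big_ord_recr big_ord0 /=; lia.
Qed.

Lemma incident_edgesE (R : realFieldType) n (L : 'I_n -> R) v :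
  positive_lengths L -> admissible L v ->
  incident_edges L v = [set cyc (split_edge (turn v pA.1) pA.2) | pA in splittings v].
Proof.
move=> hpos hv; apply/setP => S; apply/imsetP/imsetP.
- case=> e; rewrite inE => /andP [he hi] ->.
  have [p [A [hA hA0 ->]]] := incident_split he hi.
  by exists (p, A); rewrite // inE hA hA0.
- case=> -[p A]; rewrite inE /= => /andP [hA hA0] ->.
  have hvp := admissible_turn p hv.
  exists (split_edge (turn v p) A) => //; rewrite inE.
  rewrite split_edge_admissible ?part_turn0 //=.
  by apply: split_edge_incident; rewrite ?part_turn0 ?proper_sub ?turn_cyc.
Qed.

Theorem mainTheorem3 (R : realFieldType) (n : nat) (L : 'I_n -> R)
  (hn : 4 <= n)
  (hpos : positive_lengths L) (htri : strict_triangle L) (hgen : generic L)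
  (v : 3.-tuple {set 'I_n}) (hv : admissible L v) :
  #|incident_edges L v| =
    (2 ^ #|part v 0| + 2 ^ #|part v 1| + 2 ^ #|part v 2| - 6)%N.
Proof.
have hvp : ordpart v by case/andP: hv.
rewrite incident_edgesE // card_in_imset ?card_splittings // => -[p A] [q B].
rewrite !inE /= => /andP [hA hA0] /andP [hB hB0].
by move/(split_edge_cyc_inj hvp hA hA0 hB hB0) => [-> ->].
Qed.
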